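(* Let $k,n,m,t$ be positive integers. The sum, over all $\pi\in NC^k(n)$ with exactly $m$ blocks, of the number of blocks of $\pi$ of size $tk$ equals $$\binom{nk}{m-1}\binom{n-t-1}{m-2}.$$
   Context: A partition $\pi$ of $[N]=\{1,\dots,N\}$ is non-crossing if there are no $1\le a<b<c<d\le N$ with $a,c$ in one block and $b,d$ in another. $NC^k(n)$ is the set of non-crossing partitions of $[kn]$ all of whose blocks have size divisible by $k$. Binomial coefficients: for integers $a,b$, $\binom{a}{b}=\frac{a!}{b!(a-b)!}$ if $0\le b\le a$, $\binom{-1}{-1}=1$, and $\binom{a}{b}=0$ otherwise. *)

From mathcomp Require Import all_boot all_order all_algebra.
Set Implicit Arguments. Unset Strict Implicit. Unset Printing Implicit Defensive.
Import Order.TTheory GRing.Theory Num.Theory.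

(* A set partition of [N] is encoded on 'I_N = {0,...,N-1} (shifted by one,
   which preserves the order) as P : {set {set 'I_N}} with
   partition P [set: 'I_N] (blocks nonempty, pairwise disjoint, covering). *)

Definition noncrossing (N : nat) (P : {set {set 'I_N}}) : bool :=
  ~~ [exists B1 in P, exists B2 in P, exists a : 'I_N, exists b : 'I_N,
        exists c : 'I_N, exists d : 'I_N,
        [&& B1 != B2, (a < b)%N, (b < c)%N, (c < d)%N,
            a \in B1, c \in B1, b \in B2 & d \in B2]].

Definition NCk (k n : nat) : {set {set {set 'I_(k * n)}}} :=
  [set P | [&& partition P [set: 'I_(k * n)], noncrossing P
            & [forall B in P, (k %| #|B|)%N]]].

(* Binomial coefficient on integers with the paper's convention:
   C(a,b) = a!/(b!(a-b)!) if 0 <= b <= a, C(-1,-1) = 1, and 0 otherwise. *)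
Definition binz (a b : int) : nat :=
  if (0 <= b)%R && (b <= a)%R then 'C(`|a|%N, `|b|%N)
  else if (a == (-1)%R) && (b == (-1)%R) then 1%N else 0%N.

From mathcomp Require Import all_boot all_order all_algebra.
From mathcomp Require Import zify.
Set Implicit Arguments. Unset Strict Implicit. Unset Printing Implicit Defensive.

(* Code a partition of {0,...,N-1} by a = (a_0,...,a_N), where a_i is the size
   of the block whose least element is i, and a_i = 0 if there is none.  The
   codes of non-crossing partitions are exactly the sequences of sum N with
   a_0 + ... + a_(j-1) >= j for all j; decoding greedily puts each element that
   does not open a block into the latest block that is not yet full.  By the
   cycle lemma exactly one of the N+1 rotations of a sequence of sum N is a code.
   Hence, for N = nk, N+1 times the sum in the theorem counts the pairs (c, i)
   where c is a sequence of multiples of k with m positive entries and sum N and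
   c_i = tk; rotating i to the front, this is N+1 times the number of such c
   with c_0 = tk.  Choosing the positions of the other m-1 positive entries and
   a composition of n-t into m-1 parts gives C(nk, m-1) C(n-t-1, m-2). *)

Lemma sumn_take (s : seq nat) j : sumn (take j s) = \sum_(0 <= p < j) nth 0 s p.
Proof.
elim: s j => [|x s IH] [|j] /=.
- by rewrite big_nil.
- by rewrite big1_seq // => i _; rewrite nth_nil.
- by rewrite big_nil.
- by rewrite big_nat_recl // IH.
Qed.

Lemma sumn_drop (s : seq nat) r : sumn (drop r s) = sumn s - sumn (take r s).
Proof. by rewrite -{2}(cat_take_drop r s) sumn_cat; lia. Qed.

Lemma count_sum_nth (P : pred nat) (s : seq nat) :
  count P s = \sum_(i < size s) P (nth 0 s i).
Proof. elim: s => [|x s IH]; first by rewrite big_ord0. by rewrite /= big_ord_recl /= IH. Qed.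

Lemma eq_leq_sum_nat n (f g : nat -> nat) : (forall p, p < n -> f p <= g p) ->
  \sum_(0 <= p < n) f p = \sum_(0 <= p < n) g p -> forall p, p < n -> f p = g p.
Proof.
elim: n => [//|n IH] fg; rewrite !big_nat_recr //= => E p.
have le_sum : \sum_(0 <= p < n) f p <= \sum_(0 <= p < n) g p.
  by rewrite !big_nat; apply: leq_sum => i /andP [_ lt]; apply: fg; lia.
have le_n := fg n (ltnSn n).
rewrite ltnS leq_eqVlt => /orP [/eqP ->|lt]; first lia.
by apply: IH => //; [move=> q qn; apply: fg; lia | lia].
Qed.

Lemma ltn_sum_nat_ex n (f g : nat -> nat) :
  \sum_(0 <= p < n) f p < \sum_(0 <= p < n) g p -> exists2 p, p < n & f p < g p.
Proof.
elim: n => [|n IH]; first by rewrite !big_nil.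
rewrite !big_nat_recr //= => lt_sum.
have [lt|ge] := ltnP (f n) (g n); first by exists n.
by have [|p pn lt] := IH; [lia | exists p => //; lia].
Qed.

Lemma sum_nat_eqn v i : \sum_(0 <= p < i) (v == p) = (v < i).
Proof.
elim: i => [|i IH]; first by rewrite big_nil.
by rewrite big_nat_recr //= IH; case: ltngtP => //= h; lia.
Qed.

Lemma sum_nat_if_eq m n c (g : nat -> nat) : m <= c < n ->
  \sum_(m <= x < n) (if x == c then g x else 0) = g c.
Proof.
move=> /andP [mc cn]; rewrite (big_cat_nat mc (ltnW cn)) /= (big_ltn cn) eqxx.
rewrite big1_seq; last first.
  move=> x /andP [_]; rewrite mem_index_iota => /andP [_ xc].
  by rewrite ifF //; apply/negbTE; rewrite neq_ltn xc.
rewrite big1_seq; last first.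
  move=> x /andP [_]; rewrite mem_index_iota => /andP [cx _].
  by rewrite ifF //; apply/negbTE; rewrite neq_ltn cx orbT.
by rewrite add0n addn0.
Qed.

Lemma card_ord_set N (p : pred nat) : #|[set y : 'I_N | p y]| = \sum_(0 <= y < N) p y.
Proof.
rewrite -sum1_card big_mkcond big_mkord /=; apply: eq_bigr => y _.
by rewrite inE; case: (p y).
Qed.

Lemma big_tuple_cons L (T : finType) (F : L.+1.-tuple T -> nat) :
  \sum_(c : L.+1.-tuple T) F c = \sum_(x : T) \sum_(b : L.-tuple T) F [tuple of x :: b].
Proof.
rewrite pair_bigA /= (reindex (fun p : T * L.-tuple T => [tuple of p.1 :: p.2])) //=.
exists (fun c => (thead c, [tuple of behead c])).
  by move=> [x b] _ /=; rewrite theadE; congr pair; apply: val_inj.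
by move=> c _ /=; rewrite [RHS]tuple_eta.
Qed.

Definition nfiber (f : nat -> nat) (i p : nat) : nat := \sum_(0 <= x < i) (f x == p).

Lemma nfiberS f i p : nfiber f i.+1 p = nfiber f i p + (f i == p).
Proof. by rewrite /nfiber big_nat_recr. Qed.

Lemma leq_nfiber f i j p : i <= j -> nfiber f i p <= nfiber f j p.
Proof. by move=> ij; rewrite /nfiber (big_cat_nat (leq0n i) ij) /=; lia. Qed.

Lemma nfiber_ge f N x : x < N -> 0 < nfiber f N (f x).
Proof.
by move=> xN; rewrite /nfiber (big_cat_nat (leq0n x) (ltnW xN)) /= (big_ltn xN) eqxx; lia.
Qed.

Lemma nfiber_le f N p : nfiber f N p <= N.
Proof.
rewrite /nfiber; apply: leq_trans (_ : \sum_(0 <= x < N) 1 <= N).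
  by rewrite !big_nat; apply: leq_sum => x _; case: (f x == p).
by rewrite sum_nat_const_nat; lia.
Qed.

Lemma eq_nfiber f g i p : (forall x, x < i -> f x = g x) -> nfiber f i p = nfiber g i p.
Proof. by move=> fg; apply: eq_big_nat => x /andP [_ xi]; rewrite fg. Qed.

Lemma nfiber_ltn_ex f i N p : i <= N -> nfiber f i p < nfiber f N p ->
  exists2 r, i <= r < N & f r = p.
Proof.
move=> iN; rewrite /nfiber (big_cat_nat (leq0n i) iN) /= -ltn_subLR // subnn.
rewrite lt0n sum_nat_seq_neq0 => /hasP [r]; rewrite mem_index_iota => ir.
by case: (eqVneq (f r) p) => // fr _; exists r.
Qed.

Lemma sum_nfiber f i j : (forall x, x < i -> f x < j) -> \sum_(0 <= p < j) nfiber f i p = i.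
Proof.
move=> fj; rewrite /nfiber exchange_big_nat /=.
rewrite (eq_big_nat _ _ (F2 := fun _ => 1)) ?sum_nat_const_nat ?muln1 ?subn0 //.
by move=> x /andP [_ xi]; rewrite sum_nat_eqn fj.
Qed.

Fixpoint last_below (P : pred nat) (n : nat) : nat :=
  if n is n'.+1 then (if P n' then n' else last_below P n') else 0.

Lemma last_belowP (P : pred nat) n j : j < n -> P j ->
  [/\ last_below P n < n, P (last_below P n) & j <= last_below P n].
Proof.
elim: n => [//|n IH] /=; rewrite ltnS leq_eqVlt => /orP [/eqP ->|jn] Pj.
  by rewrite Pj.
case: ifP => Pn; first by split => //; lia.
by case: (IH jn Pj) => ? ? ?; split => //; lia.
Qed.

Lemma eq_last_below (P1 P2 : pred nat) n :
  (forall j, j < n -> P1 j = P2 j) -> last_below P1 n = last_below P2 n.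
Proof. by elim: n => //= n IH P12; rewrite P12 // IH // => j jn; apply: P12; lia. Qed.

Lemma last_below_lt (P : pred nat) n : 0 < n -> last_below P n < n.
Proof.
elim: n => //= n IH _; case: ifP => _ //.
by case: n IH => // n IH; have := IH isT; lia.
Qed.

(* [opener a i] is the least element of the block of i: reading 0,...,N-1 from
   left to right, i opens a block when a_i > 0 and otherwise joins the most
   recently opened block that is not yet full. *)
Fixpoint openers (a : seq nat) (n : nat) : seq nat :=
  if n is n'.+1 then
    let l := openers a n' in
    rcons l (if 0 < nth 0 a n' then n'
             else nth 0 l (last_below (fun j =>
                    nfiber (nth 0 l) n' (nth 0 l j) < nth 0 a (nth 0 l j)) n'))
  else [::].

Definition opener a i := nth 0 (openers a i.+1) i.

Lemma size_openers a n : size (openers a n) = n.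
Proof. by elim: n => //= n IH; rewrite size_rcons IH. Qed.

Lemma nth_openers a n i : i < n -> nth 0 (openers a n) i = opener a i.
Proof.
elim: n => [//|n IH]; rewrite ltnS leq_eqVlt => /orP [/eqP ->|lt] //.
by rewrite /= nth_rcons size_openers lt IH.
Qed.

Lemma openerE a i : opener a i = if 0 < nth 0 a i then i else
  opener a (last_below (fun j =>
    nfiber (opener a) i (opener a j) < nth 0 a (opener a j)) i).
Proof.
rewrite /opener /= nth_rcons size_openers ltnn eqxx; case: ifP => // a0.
have E j : j < i -> nth 0 (openers a i) j = opener a j by apply: nth_openers.
have En v : nfiber (nth 0 (openers a i)) i v = nfiber (opener a) i v by apply: eq_nfiber.
case: i a0 E En => [|i] a0 E En; first by rewrite /= a0.
set P1 := (fun j => _); set P2 := (fun j => _).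
have -> : last_below P1 i.+1 = last_below P2 i.+1.
  by apply: eq_last_below => j ji; rewrite /P1 /P2 En E.
by rewrite E // last_below_lt.
Qed.

Lemma opener_id a x : 0 < nth 0 a x -> opener a x = x.
Proof. by rewrite openerE => ->. Qed.

(* The ballot condition j <= a_0 + ... + a_(j-1) says that whenever an element
   is not the least of its block, an earlier block still has room for it. *)
Definition is_code (a : seq nat) (N : nat) :=
  [/\ size a = N.+1, sumn a = N & forall j, j <= N -> j <= sumn (take j a)].

Definition codeb (a : seq nat) N :=
  [&& size a == N.+1, sumn a == N & all (fun j => j <= sumn (take j a)) (iota 0 N.+1)].

Lemma is_codeP a N : reflect (is_code a N) (codeb a N).
Proof.
apply: (iffP and3P) => [[/eqP sa /eqP suma /allP pre]|[sa suma pre]]; split.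
- by [].
- by [].
- by move=> j jN; apply: pre; rewrite mem_iota; lia.
- by apply/eqP.
- by apply/eqP.
- by apply/allP => j; rewrite mem_iota => /andP [_ jN]; apply: pre; lia.
Qed.

Section CodeDecoding.
Variables (a : seq nat) (N : nat).
Hypothesis a_code : is_code a N.

Lemma code_last0 : nth 0 a N = 0.
Proof.
case: a_code => sa suma pre.
have := pre N (leqnn N); have := sumn_take a N.+1; rewrite take_oversize ?sa //.
by rewrite big_nat_recr //= suma sumn_take; lia.
Qed.

Lemma open_block_exists i : i < N -> nth 0 a i = 0 ->
  (forall x, x < i -> opener a x <= x) ->
  exists2 p, p < i & nfiber (opener a) i (opener a p) < nth 0 a (opener a p).
Proof.
move=> iN ai0 le_opener; case: a_code => _ _ pre.
have lt_sum : \sum_(0 <= p < i) nfiber (opener a) i p < \sum_(0 <= p < i) nth 0 a p.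
  rewrite sum_nfiber; last by move=> x xi; have := le_opener x xi; lia.
  by have := pre i.+1 iN; rewrite sumn_take big_nat_recr //= ai0 addn0; lia.
have [p pi lt] := ltn_sum_nat_ex lt_sum.
by exists p => //; rewrite opener_id //; lia.
Qed.

Lemma opener_invariant i : i <= N ->
  (forall x, x < i -> opener a x <= x /\ 0 < nth 0 a (opener a x)) /\
  (forall p, nfiber (opener a) i p <= nth 0 a p).
Proof.
elim: i => [_|i IH iN]; first by split => // p; rewrite /nfiber big_nil.
have [I1 I2] := IH (ltnW iN).
have [ai0|ai_pos] := posnP (nth 0 a i); last first.
  have Ei : opener a i = i by rewrite opener_id.
  split => [x|q].
    by rewrite ltnS leq_eqVlt => /orP [/eqP ->|/I1]; rewrite ?Ei.
  rewrite nfiberS Ei; case: eqP => [<-|_]; last by rewrite addn0.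
  suff -> : nfiber (opener a) i i = 0 by [].
  apply/eqP; rewrite /nfiber sum_nat_seq_eq0; apply/allP => x.
  rewrite mem_index_iota => /andP [_ xi]; have [le _] := I1 _ xi.
  by apply/implyP => _; apply/eqP; lia.
have [p pi lt] := open_block_exists iN ai0 (fun x xi => (I1 x xi).1).
pose open j := nfiber (opener a) i (opener a j) < nth 0 a (opener a j).
have [lt' open_last _] := last_belowP (P := open) pi lt.
have Ei : opener a i = opener a (last_below open i) by rewrite openerE ai0.
split => [x|q].
  rewrite ltnS leq_eqVlt => /orP [/eqP ->|/I1] //.
  by rewrite Ei; have [? ?] := I1 _ lt'; split => //; lia.
rewrite nfiberS; case: eqP => [<-|_]; last by rewrite addn0.
by rewrite Ei; move: open_last; rewrite /open; lia.
Qed.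

Lemma opener_spec x : x < N ->
  [/\ opener a x <= x, 0 < nth 0 a (opener a x) & opener a (opener a x) = opener a x].
Proof.
move=> xN; have [le pos] := (opener_invariant (leqnn N)).1 x xN.
by split => //; rewrite opener_id.
Qed.

Lemma opener_last_open w : w < N -> nth 0 a w = 0 ->
  exists j, [/\ j < w, opener a w = opener a j,
     nfiber (opener a) w (opener a j) < nth 0 a (opener a j) &
     forall y, y < w -> nfiber (opener a) w (opener a y) < nth 0 a (opener a y) -> y <= j].
Proof.
move=> wN aw0.
have le_opener x : x < w -> opener a x <= x.
  by move=> xw; have [] := opener_spec (ltn_trans xw wN).
have [p pw open_p] := open_block_exists wN aw0 le_opener.
pose open j := nfiber (opener a) w (opener a j) < nth 0 a (opener a j).
have [lt open_last _] := last_belowP (P := open) pw open_p.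
exists (last_below open w); split => //; first by rewrite openerE aw0.
by move=> y yw open_y; have [] := last_belowP (P := open) yw open_y.
Qed.

(* When c is placed, the block of y is still open (w joins it later), so c
   joins a block whose last element so far lies at or after y. *)
Lemma opener_noncrossing c x y w : x < y -> y < c -> c < w -> w < N ->
  opener a x = opener a c -> opener a y = opener a w -> opener a x = opener a y.
Proof.
elim/ltn_ind: c x y w => c IH x y w xy yc cw wN Exc Eyw.
have [hx _ _] := opener_spec (ltn_trans xy (ltn_trans yc (ltn_trans cw wN))).
have [hy _ _] := opener_spec (ltn_trans yc (ltn_trans cw wN)).
have ac0 : nth 0 a c = 0 by case: (posnP (nth 0 a c)) => // /opener_id Ec; lia.
have aw0 : nth 0 a w = 0 by case: (posnP (nth 0 a w)) => // /opener_id Ew; lia.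
have [jw [_ Ejw open_w _]] := opener_last_open wN aw0.
have [j [jc Ecj _ j_max]] := opener_last_open (ltn_trans cw wN) ac0.
have open_y : nfiber (opener a) c (opener a y) < nth 0 a (opener a y).
  by rewrite Eyw Ejw; apply: leq_ltn_trans open_w; apply: leq_nfiber; apply: ltnW.
move: (j_max _ yc open_y); rewrite leq_eqVlt => /orP [/eqP Eyj|yj].
  by rewrite Exc Ecj -Eyj.
by apply: (IH j jc x y w) => //; [lia | rewrite Exc].
Qed.

Lemma nfiber_opener p : p < N -> nfiber (opener a) N p = nth 0 a p.
Proof.
case: (a_code) => sa suma pre.
have [_ le_a] := opener_invariant (leqnn N).
apply: eq_leq_sum_nat => //.
rewrite sum_nfiber; last by move=> x xN; have [] := opener_spec xN; lia.
have := pre N (leqnn N); have := sumn_take a N.+1; rewrite take_oversize ?sa //.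
by rewrite big_nat_recr //= suma sumn_take; lia.
Qed.

End CodeDecoding.

Definition code_of (f : nat -> nat) N :=
  mkseq (fun i => if (i < N) && (f i == i) then nfiber f N i else 0) N.+1.

Lemma eq_code_of f g N : (forall x, x < N -> f x = g x) -> code_of f N = code_of g N.
Proof.
move=> fg; apply: eq_mkseq => i; case: (ltnP i N) => iN //=.
by rewrite fg // (eq_nfiber _ fg).
Qed.

Lemma code_of_le f N : all (fun v => v <= N) (code_of f N).
Proof.
apply/allP => v /(nthP 0) [i]; rewrite size_mkseq => iN <-.
by rewrite nth_mkseq //; case: ifP => _ //; apply: nfiber_le.
Qed.

Section CodeEncoding.
Variables (f : nat -> nat) (N : nat).
Hypothesis f_le : forall x, x < N -> f x <= x.
Hypothesis f_idem : forall x, x < N -> f (f x) = f x.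
Hypothesis f_noncrossing : forall x y c w, x < y -> y < c -> c < w -> w < N ->
  f x = f c -> f y = f w -> f x = f y.

Lemma sum_take_code_of j : j <= N.+1 ->
  \sum_(0 <= p < j) nth 0 (code_of f N) p = \sum_(0 <= x < N) (f x < j).
Proof.
move=> jN.
rewrite (eq_big_nat _ _
  (F2 := fun p => \sum_(0 <= x < N) ((p < N) && (f p == p) && (f x == p)))); last first.
  move=> p /andP [_ pj]; rewrite nth_mkseq; last lia.
  by case: ifP => // _; rewrite big1_seq.
rewrite exchange_big_nat /=; apply: eq_big_nat => x /andP [_ xN].
rewrite -(sum_nat_eqn (f x) j); apply: eq_big_nat => p _.
case: (eqVneq (f x) p) => [<-|_]; last by rewrite andbF.
by rewrite f_idem // eqxx andbT; have := f_le xN; case: ltnP => //; lia.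
Qed.

Lemma code_of_is_code : is_code (code_of f N) N.
Proof.
have all_lt x : x < N -> f x < N.+1 by move=> xN; have := f_le xN; lia.
split; first by rewrite size_mkseq.
- rewrite -(take_oversize (leqnn (size (code_of f N)))) sumn_take size_mkseq.
  rewrite sum_take_code_of // (eq_big_nat _ _ (F2 := fun _ => 1)).
    by rewrite sum_nat_const_nat; lia.
  by move=> x /andP [_ xN]; rewrite all_lt.
- move=> j jN; rewrite sumn_take sum_take_code_of; last lia.
  rewrite (big_cat_nat (leq0n j) jN) /=.
  rewrite (eq_big_nat _ _ (F2 := fun _ => 1) (m := 0) (n := j)) ?sum_nat_const_nat; first lia.
  by move=> x /andP [_ xj]; have := f_le (leq_trans xj jN); case: ltnP => //; lia.
Qed.

Lemma opener_code_of i : i < N -> opener (code_of f N) i = f i.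
Proof.
elim/ltn_ind: i => i IH iN; set a := code_of f N.
have a_root j : j < N -> nth 0 a (f j) = nfiber f N (f j).
  move=> jN; have fjN : f j < N by have := f_le jN; lia.
  by rewrite nth_mkseq /= ?fjN ?f_idem ?eqxx //; lia.
have [fi|fi] := eqVneq (f i) i.
  by rewrite opener_id // -{1}fi a_root // nfiber_ge.
have fi_lt : f i < i by have := f_le iN; rewrite leq_eqVlt (negbTE fi).
have ai0 : nth 0 a i = 0 by rewrite nth_mkseq ?(negbTE fi) ?andbF //; lia.
pose open j := nfiber f i (f j) < nfiber f N (f j).
have -> : opener a i = opener a (last_below open i).
  rewrite openerE ai0 /=; congr opener; apply: eq_last_below => j ji.
  by rewrite IH ?a_root ?(eq_nfiber _ (fun x xi => IH x xi (ltn_trans xi iN))) //; lia.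
pose j0 := last_below (fun x => f x == f i) i.
have [j0i /eqP fj0 _] := last_belowP (P := fun x => f x == f i) fi_lt (introT eqP (f_idem iN)).
have open_j0 : open j0.
  rewrite /open fj0; apply: leq_trans (leq_nfiber _ _ iN).
  by rewrite nfiberS eqxx addn1.
have [jsi open_js j0_js] := last_belowP (P := open) j0i open_j0.
rewrite IH //; last lia.
have [r /andP [ir rN] fr] := nfiber_ltn_ex (ltnW iN) open_js.
apply/eqP; apply/negPn/negP => ne.
have {}j0_js : j0 < last_below open i.
  by move: j0_js; rewrite leq_eqVlt => /orP [/eqP E|//]; move: ne; rewrite -E fj0 eqxx.
have i_r : i < r by move: ir; rewrite leq_eqVlt => /orP [/eqP E|//]; move: ne; rewrite -fr -E eqxx.
have := f_noncrossing j0_js jsi i_r rN fj0 (esym fr).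
by rewrite fj0 => E; move: ne; rewrite -E eqxx.
Qed.

End CodeEncoding.

Lemma code_of_opener a N : is_code a N -> code_of (opener a) N = a.
Proof.
move=> a_code; case: (a_code) => sa _ _.
apply: (@eq_from_nth _ 0); first by rewrite size_mkseq sa.
move=> i; rewrite size_mkseq => iN; rewrite nth_mkseq //.
have [iN'||->] := ltngtP i N; [|lia|by rewrite code_last0].
have [ai0|ai_pos] := posnP (nth 0 a i); last first.
  by rewrite /= opener_id // eqxx nfiber_opener.
have [j [ji Ej _ _]] := opener_last_open a_code iN' ai0.
have [le _ _] := opener_spec a_code (ltn_trans ji iN').
by rewrite /= Ej ifF //; apply/negbTE; rewrite neq_ltn; apply/orP; left; lia.
Qed.

Section CycleLemma.
Variables (s : seq nat) (N : nat).
Hypotheses (size_s : size s = N.+1) (sum_s : sumn s = N).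
Local Notation psum j := (sumn (take j s)).

Lemma leq_psum j l : j <= l -> psum j <= psum l.
Proof. by move=> jl; rewrite !sumn_take (big_cat_nat (leq0n j) jl) /=; lia. Qed.

Lemma psum_le j : psum j <= N.
Proof. by rewrite -sum_s -{2}(cat_take_drop j s) sumn_cat; lia. Qed.

Lemma sumn_take_rot r j : r <= N -> j <= N ->
  sumn (take j (rot r s)) =
  if j < N.+1 - r then psum (j + r) - psum r else N - psum r + psum (j - (N.+1 - r)).
Proof.
move=> rN jN; rewrite /rot take_cat size_drop size_s.
case: ifP => h; first by rewrite take_drop sumn_drop take_takel //; lia.
by rewrite sumn_cat sumn_drop sum_s take_takel //; lia.
Qed.

(* r is the first index minimising psum l - l over l <= N. *)
Definition first_min r :=
  (forall l, l <= N -> psum r + l <= psum l + r) /\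
  (forall l, l < r -> psum r + l < psum l + r).

Lemma first_min_rot_code r : r <= N ->
  (forall j, j <= N -> j <= sumn (take j (rot r s))) -> first_min r.
Proof.
move=> rN rot_ballot; have psum0 : psum 0 = 0 by rewrite take0.
have strict l : l < r -> psum r + l < psum l + r.
  case: l => [|l] lr.
    have := rot_ballot (N.+1 - r); rewrite sumn_take_rot; try lia.
    by rewrite ltnn subnn psum0 => h; have := psum_le r; lia.
  have := rot_ballot (l.+1 + (N.+1 - r)); rewrite sumn_take_rot; try lia.
  rewrite ifF; last lia.
  have -> : l.+1 + (N.+1 - r) - (N.+1 - r) = l.+1 by lia.
  by move=> h; have := psum_le r; lia.
split => // l lN; have [lr|rl] := ltnP l r; first by have := strict l lr; lia.
have := rot_ballot (l - r); rewrite sumn_take_rot; try lia.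
rewrite ifT; last lia.
have -> : l - r + r = l by lia.
by move=> h; have := leq_psum rl; lia.
Qed.

Lemma rot_code_first_min r : r <= N -> first_min r ->
  forall j, j <= N -> j <= sumn (take j (rot r s)).
Proof.
move=> rN [min_r first_r] j jN; rewrite sumn_take_rot //.
case: ifP => h; first by have := min_r (j + r); have := leq_psum (leq_addl j r); lia.
by have := first_r (j - (N.+1 - r)); have := psum_le r; lia.
Qed.

Lemma first_min_uniq r r' : r <= N -> r' <= N -> first_min r -> first_min r' -> r = r'.
Proof.
move=> rN rN' [min_r first_r] [min_r' first_r'].
case: (ltngtP r r') => // h.
- by have := first_r' r h; have := min_r r' rN'; lia.
- by have := first_r r' h; have := min_r' r rN; lia.
Qed.

Lemma first_min_exists : exists2 r, r <= N & first_min r.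
Proof.
pose w (l : 'I_N.+1) := psum l + N.+1 - l.
have [r1 _ r1_min] := arg_minnP w (isT : predT (ord0 : 'I_N.+1)).
have ex : exists r, (r < N.+1) && (psum r + N.+1 - r == w r1).
  by exists r1; rewrite ltn_ord eqxx.
have [r0 /andP [r0N /eqP Er0] r0_first] := ex_minnP ex.
exists r0; first lia.
split => [l lN|l lr0].
  by have := r1_min (Ordinal (leq_ltn_trans lN (ltnSn N))) isT; rewrite -Er0 /w /=; lia.
have := r1_min (Ordinal (ltn_trans lr0 r0N)) isT; rewrite -Er0 /w /= => h.
have : psum l + N.+1 - l != w r1.
  apply/negP => E; have := r0_first l; rewrite E andbT => /(_ (ltn_trans lr0 r0N)); lia.
by rewrite -Er0; lia.
Qed.

Lemma cycle_lemma : \sum_(r < N.+1) codeb (rot r s) N = 1.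
Proof.
have [r0 r0N first_r0] := first_min_exists.
have codeE (r : 'I_N.+1) : codeb (rot r s) N = (val r == r0).
  have rN : r <= N by have := ltn_ord r; lia.
  apply/is_codeP/eqP => [[_ _ rot_ballot]|Er].
    exact: first_min_uniq rN r0N (first_min_rot_code rN rot_ballot) first_r0.
  split; [by rewrite size_rot | by rewrite sumn_rot |].
  by apply: rot_code_first_min => //; rewrite Er.
rewrite (eq_bigr _ (fun r _ => congr1 nat_of_bool (codeE r))).
rewrite (bigD1 (Ordinal (leq_ltn_trans r0N (ltnSn N)))) //= eqxx big1 // => r.
by rewrite -val_eqE /= => /negbTE ->.
Qed.

End CycleLemma.

Fixpoint ncomp (q j : nat) : nat :=
  if j is j'.+1 then \sum_(1 <= v < q.+1) ncomp (q - v) j' else (q == 0).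

Lemma ncompSS q j : ncomp q.+1 j.+1 = ncomp q j + ncomp q j.+1.
Proof.
rewrite /= big_ltn // subSS subn0; congr addn.
by rewrite big_add1 /=; apply: eq_big_nat => v _; congr ncomp; lia.
Qed.

Lemma ncomp_bin q j : ncomp q.+1 j.+1 = 'C(q, j).
Proof.
elim: q j => [|q IH] j.
  by rewrite /= big_nat1 subnn; case: j => [|j] //=; rewrite big_geq.
rewrite ncompSS IH; case: j => [|j]; first by rewrite /= !bin0.
by rewrite IH binS addnC.
Qed.

Lemma sum_nat_multiples k B q (h : nat -> nat) : 0 < k -> q * k < B ->
  \sum_(1 <= x < B) (if (k %| x) && (x <= q * k) then h (x %/ k) else 0) =
  \sum_(1 <= v < q.+1) h v.
Proof.
move=> k0; elim: q => [|q IH] qB.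
  rewrite [RHS]big_geq // big1_seq // => x /andP [_]; rewrite mem_index_iota => /andP [x1 _].
  by rewrite mul0n leqNgt x1 andbF.
rewrite big_nat_recr //= -IH; last by lia.
rewrite -{2}(mulnK q.+1 k0).
rewrite -(sum_nat_if_eq (m := 1) (n := B) (c := q.+1 * k) (fun x => h (x %/ k))); last first.
  by rewrite muln_gt0 k0.
rewrite -big_split /=; apply: eq_big_nat => x _.
have [->|ne] := eqVneq x (q.+1 * k).
  have -> : (q.+1 * k <= q * k) = false by rewrite leq_pmul2r // ltnn.
  by rewrite andbF add0n leqnn andbT dvdn_mull.
rewrite addn0; congr (if _ then _ else _).
case: (boolP (k %| x)) => //= /dvdnP [y Ey].
by move: ne; rewrite Ey eqn_pmul2r // !leq_pmul2r //; lia.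
Qed.

Definition kcomp k j q (b : seq nat) :=
  [&& all (fun v => k %| v) b, count (fun v => 0 < v) b == j & sumn b == q * k].

Definition nkcomp B L k j q := \sum_(b : L.-tuple 'I_B) kcomp k j q (map val b).

Lemma nkcomp0 B k j q : 0 < k -> nkcomp B 0 k j q = 'C(0, j) * ncomp q j.
Proof.
move=> k0; rewrite /nkcomp (big_pred1 [tuple]) /=; last first.
  by move=> t; symmetry; apply/eqP; apply: tuple0.
rewrite /kcomp /=; case: j => [|j] /=; last by rewrite bin0n.
by rewrite bin0 mul1n; case: q => //= q; rewrite mulSn; case: k k0.
Qed.

Lemma nkcomp_cons0 B L k j q :
  \sum_(b : L.-tuple 'I_B) kcomp k j q (0 :: map val b) = nkcomp B L k j q.
Proof. by apply: eq_bigr => b _; rewrite /kcomp /= dvdn0 add0n. Qed.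

Lemma nkcomp_cons B L k j q x : 0 < k -> 0 < x ->
  \sum_(b : L.-tuple 'I_B) kcomp k j.+1 q (x :: map val b) =
  if (k %| x) && (x <= q * k) then nkcomp B L k j (q - x %/ k) else 0.
Proof.
move=> k0 x0; rewrite /nkcomp.
have [/dvdnP [y Ex]|nd] /= := boolP (k %| x); last first.
  by rewrite big1 // => b _; rewrite /kcomp /= (negbTE nd).
subst x.
have y0 : 0 < y by move: x0; rewrite muln_gt0; case/andP.
rewrite mulnK // leq_pmul2r //.
have [yq|qy] := leqP y q.
  apply: eq_bigr => b _; rewrite /kcomp /= dvdn_mull // muln_gt0 y0 k0 add1n eqSS.
  have ykq : y * k <= q * k by rewrite leq_pmul2r.
  by congr (_ && (_ && _)); rewrite mulnBl; apply/eqP/eqP; lia.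
rewrite big1 // => b _; rewrite /kcomp /=.
suff /negbTE -> : y * k + sumn [seq val i | i <- b] != q * k by rewrite !andbF.
by apply/eqP; rewrite -(ltn_pmul2r k0) in qy; lia.
Qed.

Lemma nkcomp_cons_pos B L k q x : 0 < x ->
  \sum_(b : L.-tuple 'I_B) kcomp k 0 q (x :: map val b) = 0.
Proof. by move=> x0; rewrite big1 // => b _; rewrite /kcomp /= x0 /= !andbF. Qed.

Lemma nkcompE B L k j q : 0 < k -> q * k < B -> nkcomp B L k j q = 'C(L, j) * ncomp q j.
Proof.
move=> k0; elim: L j q => [|L IH] j q qB; first exact: nkcomp0.
rewrite [LHS]/nkcomp big_tuple_cons /= -(big_mkord xpredT
  (fun x => \sum_(b : L.-tuple 'I_B) kcomp k j q (x :: map val b))).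
rewrite big_ltn ?(leq_ltn_trans (leq0n _) qB) //= nkcomp_cons0 IH //.
case: j => [|j].
  rewrite big1_seq ?bin0 ?addn0 // => x /andP [_].
  by rewrite mem_index_iota => /andP [x0 _]; apply: nkcomp_cons_pos.
rewrite (eq_big_nat _ _ (F2 := fun x =>
  if (k %| x) && (x <= q * k) then nkcomp B L k j (q - x %/ k) else 0)); last first.
  by move=> x /andP [x0 _]; apply: nkcomp_cons.
rewrite (sum_nat_multiples (fun v => nkcomp B L k j (q - v))) //.
rewrite (eq_big_nat _ _ (F2 := fun v => 'C(L, j) * ncomp (q - v) j)); last first.
  by move=> v /andP [_ vq]; rewrite IH //; apply: leq_ltn_trans qB; rewrite leq_pmul2r //; lia.
by rewrite -big_distrr /= binS mulnDl addnC.
Qed.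

Lemma nth0_rot (s : seq nat) i : i < size s -> nth 0 (rot i s) 0 = nth 0 s i.
Proof. by move=> si; rewrite /rot nth_cat size_drop subn_gt0 si nth_drop addn0. Qed.

Lemma count_rot (T : eqType) (P : pred T) r (s : seq T) : count P (rot r s) = count P s.
Proof. by apply/permP; rewrite perm_rot. Qed.

Lemma count_rotr (T : eqType) (P : pred T) r (s : seq T) : count P (rotr r s) = count P s.
Proof. exact: count_rot. Qed.

Definition kseq N k m (c : seq nat) :=
  [&& all (fun v => k %| v) c, count (fun v => 0 < v) c == m & sumn c == N].

Lemma kseq_rot N k m r c : kseq N k m (rot r c) = kseq N k m c.
Proof.
have rc : perm_eq (rot r c) c by rewrite perm_rot.
by rewrite /kseq (perm_all _ rc) count_rot sumn_rot.
Qed.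

Lemma kseq_rotr N k m r c : kseq N k m (rotr r c) = kseq N k m c.
Proof. by rewrite /rotr kseq_rot. Qed.

Definition nhead N k m s :=
  \sum_(c : N.+1.-tuple 'I_N.+1 | kseq N k m (map val c) && (nth 0 (map val c) 0 == s)) 1.

Section RotationCounting.
Variables (N k m s : nat).
Local Notation seqs := (N.+1.-tuple 'I_N.+1).

Lemma rot_tuple_inj r : injective (@rot_tuple N.+1 r 'I_N.+1).
Proof. by move=> x y /(congr1 val) /rot_inj /val_inj. Qed.

Lemma rotr_tuple_inj r : injective (@rotr_tuple N.+1 r 'I_N.+1).
Proof. by move=> x y /(congr1 val) /(can_inj (@rotrK r _)) /val_inj. Qed.

Lemma sum_count_kseq_codes :
  \sum_(c : seqs | kseq N k m (map val c)) count (pred1 s) (map val c) =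
  N.+1 * \sum_(c : seqs | codeb (map val c) N && kseq N k m (map val c))
           count (pred1 s) (map val c).
Proof.
rewrite (eq_bigr (fun c : seqs =>
  \sum_(r < N.+1) (codeb (rot r (map val c)) N * count (pred1 s) (map val c)))); last first.
  move=> c /and3P [_ _ /eqP sc]; rewrite -big_distrl /= cycle_lemma ?mul1n //.
  by rewrite size_map size_tuple.
have -> X : N.+1 * X = \sum_(r < N.+1) X by rewrite sum_nat_const card_ord.
rewrite exchange_big /=; apply: eq_bigr => r _.
rewrite big_mkcond [RHS]big_mkcond /= (reindex_inj (rotr_tuple_inj (r := r))) /=.
apply: eq_bigr => c _; rewrite !map_rotr kseq_rotr count_rotr rotrK.
by case: (kseq _ _ _ _); case: (codeb _ _); rewrite ?andbT ?andbF //= ?mul1n.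
Qed.

Lemma sum_count_kseq_head :
  \sum_(c : seqs | kseq N k m (map val c)) count (pred1 s) (map val c) = N.+1 * nhead N k m s.
Proof.
rewrite (eq_bigr (fun c : seqs => \sum_(i < N.+1) (nth 0 (map val c) i == s))); last first.
  by move=> c _; rewrite count_sum_nth size_map size_tuple.
rewrite big_mkcond /= (eq_bigr (fun c : seqs =>
  \sum_(i < N.+1) (kseq N k m (map val c) && (nth 0 (map val c) i == s)))); last first.
  by move=> c _; case: (kseq _ _ _ _) => //; rewrite big1.
have -> X : N.+1 * X = \sum_(r < N.+1) X by rewrite sum_nat_const card_ord.
rewrite exchange_big /=; apply: eq_bigr => i _.
rewrite [RHS]big_mkcond /= [RHS](reindex_inj (rot_tuple_inj (r := i))) /=.
by apply: eq_bigr => c _; rewrite !map_rot kseq_rot nth0_rot ?size_map ?size_tuple.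
Qed.

Lemma sum_count_codes :
  \sum_(c : seqs | codeb (map val c) N && kseq N k m (map val c)) count (pred1 s) (map val c)
  = nhead N k m s.
Proof.
by apply/eqP; rewrite -(eqn_pmul2l (ltn0Sn N)) -sum_count_kseq_codes sum_count_kseq_head.
Qed.

End RotationCounting.

Lemma nhead_sum N k m s : nhead N k m s =
  \sum_(0 <= x < N.+1) (if x == s then \sum_(b : N.-tuple 'I_N.+1) kseq N k m (x :: map val b)
                        else 0).
Proof.
rewrite /nhead big_mkcond /= (eq_bigr (fun c : N.+1.-tuple 'I_N.+1 =>
  nat_of_bool (kseq N k m (map val c) && (nth 0 (map val c) 0 == s)))); last first.
  by move=> c _; case: (_ && _).
rewrite big_tuple_cons /= big_mkord; apply: eq_bigr => x _.
case: (val x == s); first by apply: eq_bigr => b _; rewrite andbT.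
by rewrite big1 // => b _; rewrite andbF.
Qed.

Lemma nhead_nkcomp N k m s q : 0 < k -> 0 < s -> k %| s -> N = q * k + s ->
  nhead N k m.+1 s = nkcomp N.+1 N k m q.
Proof.
move=> k0 s0 ks NE; rewrite nhead_sum (sum_nat_if_eq (fun x =>
  \sum_(b : N.-tuple 'I_N.+1) kseq N k m.+1 (x :: map val b))); last by lia.
apply: eq_bigr => b _; rewrite /kseq /kcomp /= ks s0 /= add1n eqSS.
by congr (_ && (_ && _)); apply/eqP/eqP; lia.
Qed.

Lemma nhead_gt N k m s : N < s -> nhead N k m s = 0.
Proof.
move=> Ns; rewrite nhead_sum big1_seq // => x /andP [_].
by rewrite mem_index_iota => /andP [_ xN]; rewrite ifF //; apply/negbTE; rewrite neq_ltn; lia.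
Qed.

Lemma binz_nat (a b : nat) : binz a%:Z b%:Z = 'C(a, b).
Proof. by rewrite /binz; case: ifP => // h; rewrite bin_small //; move: h; lia. Qed.

Lemma binz_ncomp (q j : nat) : binz (q%:Z - 1)%R (j%:Z - 1)%R = ncomp q j.
Proof.
case: j => [|j]; case: q => [|q]; try by rewrite /= ?big_geq.
have -> : (j.+1%:Z - 1 = j%:Z)%R by lia.
have -> : (q.+1%:Z - 1 = q%:Z)%R by lia.
by rewrite binz_nat ncomp_bin.
Qed.

Lemma binz_neg (a b : int) : (a <= -2)%R -> (-1 <= b)%R -> binz a b = 0.
Proof.
move=> ha hb; rewrite /binz; case: ifP => h; first by exfalso; move: h; lia.
by rewrite ifF //; apply/negbTE; apply/negP => /andP [/eqP h1 _]; lia.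
Qed.

Definition partition_of_code N a : {set {set 'I_N}} :=
  preim_partition (fun i : 'I_N => opener a i) [set: 'I_N].

Lemma pblock_partition_of_code N a (x y : 'I_N) :
  (y \in pblock (partition_of_code N a) x) = (opener a x == opener a y).
Proof.
rewrite /partition_of_code /preim_partition pblock_equivalence_partition ?inE //.
by move=> u v w _ _ _; split; [rewrite eqxx | move/eqP ->].
Qed.

Lemma partition_of_code_partition N a : partition (partition_of_code N a) [set: 'I_N].
Proof. exact: preim_partitionP. Qed.

Section PartitionOfCode.
Variables (N : nat) (a : seq nat).
Hypothesis a_code : is_code a N.
Local Notation block x := [set y in [set: 'I_N] | opener a (x : 'I_N) == opener a y].
Local Notation roots := [set r : 'I_N | 0 < nth 0 a r].

Lemma mem_partition_of_code B : (B \in partition_of_code N a) = [exists x, B == block x].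
Proof.
apply/imsetP/existsP => [[x _ ->]|[x /eqP ->]]; first by exists x.
by exists x; rewrite ?inE.
Qed.

Lemma card_block (x : 'I_N) : #|block x| = nth 0 a (opener a x).
Proof.
have [le _ _] := opener_spec a_code (ltn_ord x).
rewrite -(nfiber_opener a_code) //; last by have := ltn_ord x; lia.
rewrite /nfiber -(card_ord_set N (fun y => opener a y == opener a x)).
by apply: eq_card => y; rewrite !inE eq_sym.
Qed.

Lemma opener_ltn (x : 'I_N) : opener a x < N.
Proof. by have [le _ _] := opener_spec a_code (ltn_ord x); apply: leq_ltn_trans le _. Qed.

Lemma block_opener x : block (Ordinal (opener_ltn x)) = block x.
Proof. by apply/setP => y; rewrite !inE /=; have [_ _ ->] := opener_spec a_code (ltn_ord x). Qed.

Lemma partition_of_codeE : partition_of_code N a = [set block x | x in roots].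
Proof.
apply/setP => B; rewrite mem_partition_of_code.
apply/existsP/imsetP => [[x /eqP ->]|[r _ ->]]; last by exists r.
exists (Ordinal (opener_ltn x)); last by rewrite block_opener.
by rewrite inE /=; have [_ -> _] := opener_spec a_code (ltn_ord x).
Qed.

Lemma block_inj : {in roots &, injective (fun x => block x)}.
Proof.
move=> r1 r2; rewrite !inE => r1_pos r2_pos /= E.
have : r2 \in block r1 by rewrite E !inE eqxx.
by rewrite !inE /= !opener_id // => /eqP E'; apply: val_inj.
Qed.

Lemma count_code (P : pred nat) : ~~ P 0 -> count P a = \sum_(0 <= i < N) P (nth 0 a i).
Proof.
move=> P0; case: (a_code) => sa _ _.
by rewrite count_sum_nth sa big_ord_recr /= code_last0 // (negbTE P0) addn0 big_mkord.
Qed.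

Lemma card_partition_of_code : #|partition_of_code N a| = count (fun v => 0 < v) a.
Proof.
rewrite partition_of_codeE card_in_imset; last exact: block_inj.
by rewrite count_code // -(card_ord_set N (fun i => 0 < nth 0 a i)).
Qed.

Lemma card_blocks_of_size s : 0 < s ->
  #|[set B in partition_of_code N a | #|B| == s]| = count (pred1 s) a.
Proof.
move=> s0.
have -> : [set B in partition_of_code N a | #|B| == s] =
          [set block x | x in [set r : 'I_N | nth 0 a r == s]].
  apply/setP => B; rewrite inE partition_of_codeE; apply/andP/imsetP.
  - move=> [/imsetP [r]]; rewrite inE => r_pos -> /eqP <-; exists r => //.
    by rewrite inE card_block opener_id.
  - move=> [r]; rewrite inE => /eqP ar ->; split; last by rewrite card_block opener_id ?ar.
    by apply/imsetP; exists r => //; rewrite inE ar.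
rewrite card_in_imset; last first.
  by move=> r1 r2; rewrite !inE => /eqP a1 /eqP a2; apply: block_inj; rewrite inE ?a1 ?a2.
rewrite count_code /=; last by rewrite eq_sym -lt0n.
by rewrite -(card_ord_set N (fun i => nth 0 a i == s)).
Qed.

Lemma noncrossing_partition_of_code : noncrossing (partition_of_code N a).
Proof.
apply/negP => /existsP [B1] /andP [B1P] /existsP [B2] /andP [B2P].
move=> /existsP [x] /existsP [y] /existsP [c] /existsP [w].
move=> /and5P [ne xy yc cw /and4P [xB1 cB1 yB2 wB2]].
move: B1P B2P; rewrite !mem_partition_of_code => /existsP [x1 /eqP E1] /existsP [x2 /eqP E2].
move: xB1 cB1 yB2 wB2; rewrite E1 E2 !inE /= => /eqP h1 /eqP h2 /eqP h3 /eqP h4.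
have := opener_noncrossing a_code xy yc cw (ltn_ord w) (etrans (esym h1) h2) (etrans (esym h3) h4).
move=> E; move: ne; rewrite E1 E2; apply/negP; rewrite negbK; apply/eqP/setP => z.
by rewrite !inE h1 h3 E.
Qed.

Lemma dvdn_blocks_of_code k :
  all (fun v => k %| v) a -> [forall B in partition_of_code N a, k %| #|B|].
Proof.
move=> /allP k_a; apply/forall_inP => B; rewrite mem_partition_of_code => /existsP [x /eqP ->].
rewrite card_block; apply: k_a; apply: mem_nth; case: (a_code) => -> _ _.
by have := opener_ltn x; lia.
Qed.

End PartitionOfCode.

Section CodeOfPartition.
Variables (N : nat) (P : {set {set 'I_N}}).
Hypotheses (P_part : partition P [set: 'I_N]) (P_nc : noncrossing P).

Lemma mem_pblock_self (x : 'I_N) : x \in pblock P x.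
Proof. by rewrite mem_pblock (cover_partition P_part) inE. Qed.

Lemma pblock_in (x : 'I_N) : pblock P x \in P.
Proof. by rewrite pblock_mem ?(cover_partition P_part) ?inE. Qed.

Definition pmin (x : 'I_N) : 'I_N := [arg min_(j < x in pblock P x) val j].

Lemma pminP x : pmin x \in pblock P x /\ forall j, j \in pblock P x -> pmin x <= j.
Proof. by rewrite /pmin; case: arg_minnP; [exact: mem_pblock_self | move=> i ? ?; split]. Qed.

Lemma pblock_pmin x : pblock P (pmin x) = pblock P x.
Proof. by apply: same_pblock (pminP x).1; case/and3P: P_part. Qed.

Lemma mem_pblock_pmin x y : (y \in pblock P x) = (pmin y == pmin x).
Proof.
apply/idP/eqP => [yx|E]; last by rewrite -pblock_pmin -E pblock_pmin mem_pblock_self.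
have Eb : pblock P y = pblock P x by apply: same_pblock yx; case/and3P: P_part.
have [x_in x_min] := pminP x; have [y_in y_min] := pminP y.
apply: val_inj; apply/eqP; rewrite eqn_leq.
by rewrite y_min ?Eb // x_min // -Eb.
Qed.

Lemma pmin_le x : pmin x <= x.
Proof. exact: (pminP x).2 (mem_pblock_self x). Qed.

Lemma pmin_idem x : pmin (pmin x) = pmin x.
Proof. by apply/eqP; rewrite -mem_pblock_pmin; exact: (pminP x).1. Qed.

Definition pmin_nat (i : nat) : nat := if insub i is Some x then val (pmin x) else i.

Lemma pmin_natE x (xN : x < N) : pmin_nat x = pmin (Ordinal xN).
Proof. by rewrite /pmin_nat insubT. Qed.

Lemma pmin_nat_ord (x : 'I_N) : pmin_nat x = pmin x.
Proof. by rewrite (pmin_natE (ltn_ord x)); congr (val (pmin _)); apply: val_inj. Qed.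

Lemma pmin_nat_le x : x < N -> pmin_nat x <= x.
Proof. by move=> xN; rewrite (pmin_natE xN) pmin_le. Qed.

Lemma pmin_nat_idem x : x < N -> pmin_nat (pmin_nat x) = pmin_nat x.
Proof. by move=> xN; rewrite (pmin_natE xN) pmin_nat_ord pmin_idem. Qed.

Lemma pmin_nat_noncrossing x y c w : x < y -> y < c -> c < w -> w < N ->
  pmin_nat x = pmin_nat c -> pmin_nat y = pmin_nat w -> pmin_nat x = pmin_nat y.
Proof.
move=> xy yc cw wN.
have cN : c < N by lia. have yN : y < N by lia. have xN : x < N by lia.
rewrite (pmin_natE xN) (pmin_natE yN) (pmin_natE cN) (pmin_natE wN).
move=> /val_inj E1 /val_inj E2; apply/eqP; rewrite val_eqE; apply/negPn/negP => ne.
move: P_nc => /negP; apply; apply/existsP; exists (pblock P (Ordinal xN)).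
rewrite pblock_in; apply/existsP; exists (pblock P (Ordinal yN)); rewrite pblock_in /=.
apply/existsP; exists (Ordinal xN); apply/existsP; exists (Ordinal yN).
apply/existsP; exists (Ordinal cN); apply/existsP; exists (Ordinal wN).
rewrite /= xy yc cw !mem_pblock_self !mem_pblock_pmin E1 E2 !eqxx !andbT /=.
by apply/eqP => Eb; move: ne; rewrite eq_sym -mem_pblock_pmin Eb mem_pblock_self.
Qed.

Definition code_of_partition := code_of pmin_nat N.

Lemma is_code_of_partition : is_code code_of_partition N.
Proof. by apply: code_of_is_code; [exact: pmin_nat_le | exact: pmin_nat_idem]. Qed.

Lemma opener_code_of_partition (x : 'I_N) : opener code_of_partition x = pmin x.
Proof.
rewrite opener_code_of ?ltn_ord ?pmin_nat_ord //.
- exact: pmin_nat_le.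
- exact: pmin_nat_idem.
- exact: pmin_nat_noncrossing.
Qed.

Lemma partition_of_code_of_partition : partition_of_code N code_of_partition = P.
Proof.
rewrite /partition_of_code -[RHS](preim_partition_pblock P_part).
rewrite /preim_partition /equivalence_partition; apply: eq_imset => x; apply/setP => y.
rewrite !inE !opener_code_of_partition; apply/eqP/eqP => [/val_inj E|E].
- by rewrite -(pblock_pmin x) E pblock_pmin.
- by congr val; apply/eqP; rewrite -mem_pblock_pmin -E mem_pblock_self.
Qed.

Lemma dvdn_code_of_partition k :
  [forall B in P, k %| #|B|] -> all (fun v => k %| v) code_of_partition.
Proof.
move=> /forall_inP P_k; apply/allP => v /(nthP 0) [i]; rewrite size_mkseq => iN <-.
rewrite nth_mkseq //; case: ifP => [/andP [iN' /eqP ri]|_]; last by rewrite dvdn0.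
have := P_k _ (pblock_in (Ordinal iN')); congr (_ %| _).
rewrite /nfiber -card_ord_set; apply: eq_card => y; rewrite !inE.
by rewrite mem_pblock_pmin pmin_nat_ord -{2}ri (pmin_natE iN').
Qed.

End CodeOfPartition.

Lemma partition_of_code_inj N a1 a2 : is_code a1 N -> is_code a2 N ->
  partition_of_code N a1 = partition_of_code N a2 -> a1 = a2.
Proof.
move=> a1_code a2_code E.
have same_block (x y : 'I_N) : (opener a1 x == opener a1 y) = (opener a2 x == opener a2 y).
  by rewrite -!pblock_partition_of_code E.
rewrite -(code_of_opener a1_code) -(code_of_opener a2_code); apply: eq_code_of => x xN.
have [le1 _ id1] := opener_spec a1_code xN; have [le2 _ id2] := opener_spec a2_code xN.
have r1N : opener a1 x < N by lia. have r2N : opener a2 x < N by lia.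
have := same_block (Ordinal xN) (Ordinal r1N); have := same_block (Ordinal xN) (Ordinal r2N).
rewrite /= id1 id2 !eqxx => /esym/eqP e1 /eqP e2.
have [le1' _ _] := opener_spec a2_code r1N; have [le2' _ _] := opener_spec a1_code r2N.
lia.
Qed.

Definition ncpart N k := [set P : {set {set 'I_N}} |
  [&& partition P [set: 'I_N], noncrossing P & [forall B in P, k %| #|B|]]].

Definition tuple_of_seq N (l : seq nat) : N.+1.-tuple 'I_N.+1 :=
  [tuple inord (nth 0 l i) | i < N.+1].

Lemma tuple_of_seqK N l : size l = N.+1 -> all (fun v => v <= N) l ->
  map val (tuple_of_seq N l) = l.
Proof.
move=> sl /allP l_le; apply: (@eq_from_nth _ 0); first by rewrite size_map size_tuple sl.
move=> i; rewrite size_map size_tuple => iN.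
rewrite (nth_map (ord0 : 'I_N.+1)) ?size_tuple // -(tnth_nth _ _ (Ordinal iN)) tnth_mktuple /=.
by rewrite inordK // ltnS; apply: l_le; apply: mem_nth; rewrite sl.
Qed.

Section CodesOfPartitions.
Variables (N k m s : nat).
Local Notation seqs := (N.+1.-tuple 'I_N.+1).

Definition partition_of_tuple (a : seqs) := partition_of_code N (map val a).

Definition kcodes := [set a : seqs | codeb (map val a) N && all (fun v => k %| v) (map val a)].

Lemma ncpart_image : ncpart N k = partition_of_tuple @: kcodes.
Proof.
apply/setP => P; apply/idP/imsetP.
- rewrite inE => /and3P [P_part P_nc P_k].
  have c_code := is_code_of_partition P_part.
  have [size_c _ _] := c_code.
  exists (tuple_of_seq N (code_of_partition P)).
    rewrite inE tuple_of_seqK ?code_of_le //.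
    by apply/andP; split; [apply/is_codeP | exact: dvdn_code_of_partition].
  by rewrite /partition_of_tuple tuple_of_seqK ?code_of_le // partition_of_code_of_partition.
- move=> [a]; rewrite inE => /andP [/is_codeP a_code a_k] ->.
  rewrite inE partition_of_code_partition noncrossing_partition_of_code //.
  exact: dvdn_blocks_of_code.
Qed.

Lemma partition_of_tuple_inj : {in kcodes &, injective partition_of_tuple}.
Proof.
move=> a1 a2; rewrite !inE => /andP [/is_codeP a1_code _] /andP [/is_codeP a2_code _] E.
by apply: val_inj; apply: (inj_map val_inj); apply: partition_of_code_inj a1_code a2_code E.
Qed.

Lemma sum_blocks_of_size_codes : 0 < s ->
  \sum_(P in ncpart N k | #|P| == m) #|[set B in P | #|B| == s]| =
  \sum_(a : seqs | codeb (map val a) N && kseq N k m (map val a)) count (pred1 s) (map val a).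
Proof.
move=> s0; rewrite ncpart_image big_imset_cond; last exact: partition_of_tuple_inj.
rewrite [LHS]big_mkcond [RHS]big_mkcond /=; apply: eq_bigr => a _.
rewrite inE; case: (boolP (codeb _ _)) => //= /is_codeP a_code.
have [_ sum_a _] := a_code.
rewrite /partition_of_tuple card_partition_of_code // card_blocks_of_size // /kseq sum_a eqxx andbT.
by case: (all _ _); case: (count _ _ == m).
Qed.

End CodesOfPartitions.

Theorem proposition2p1 (k n m t : nat) :
  (0 < k)%N -> (0 < n)%N -> (0 < m)%N -> (0 < t)%N ->
  (\sum_(P in NCk k n | #|P| == m) #|[set B in P | #|B| == t * k]|)%N
  = (binz (n * k)%:Z (m%:Z - 1)%R * binz (n%:Z - t%:Z - 1)%R (m%:Z - 2)%R)%N.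
Proof.
move=> k0 _ m0 t0.
have tk0 : 0 < t * k by rewrite muln_gt0 t0 k0.
change (NCk k n) with (ncpart (k * n) k).
rewrite sum_blocks_of_size_codes // sum_count_codes.
case: m m0 => [//|m] _.
have -> : (m.+1%:Z - 1 = m%:Z)%R by lia.
rewrite binz_nat mulnC.
have [tn|nt] := leqP t n; last first.
  rewrite nhead_gt ?ltn_pmul2r // binz_neg ?muln0 //; lia.
have -> : (n%:Z - t%:Z - 1 = (n - t)%:Z - 1)%R by lia.
have -> : (m.+1%:Z - 2 = m%:Z - 1)%R by lia.
rewrite (@nhead_nkcomp _ k m (t * k) (n - t)) ?dvdn_mull // ?nkcompE ?binz_ncomp //.
- by rewrite ltnS leq_pmul2r // leq_subr.
- by rewrite -mulnDl subnK.
Qed.
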